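(* Let $\widetilde{SL}_2(\mathbb{R})$ be identified with $\mathbb{R}^3_+=\{(x,y,z):z>0\}$ endowed with the metric $ds^2=\left(dx+\frac{dy}{z}\right)^2+\frac{dy^2+dz^2}{z^2}$, and let $\pi:\mathbb{R}^3_+\to\mathbb{H}^2$, $\pi(x,y,z)=(y,z)$, where $\mathbb{H}^2$ is the upper half-plane with metric $\frac{dy^2+dz^2}{z^2}$ (a Riemannian submersion with minimal fibres). Let $\gamma:I\to\mathbb{H}^2$ be a curve parametrised by arc length with signed curvature $k$. Then the cylinder $S=\pi^{-1}(\gamma(I))$ is a biminimal surface with respect to $\lambda$ in $\widetilde{SL}_2(\mathbb{R})$ if and only if $\gamma$ is a biminimal curve with respect to $\lambda+1$ in $\mathbb{H}^2$, i.e. $k''=k^3+(2+\lambda)k$.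
   Context: For a map $\phi$: tension field $\tau(\phi)=\operatorname{trace}\nabla d\phi$, bitension field $\tau_2(\phi)=\sum_i(\nabla^\phi_{e_i}\nabla^\phi_{e_i}-\nabla^\phi_{\nabla_{e_i}e_i})\tau(\phi)+\sum_iR^N(d\phi(e_i),\tau(\phi))d\phi(e_i)$, with $R(X,Y)Z=\nabla_{[X,Y]}Z-\nabla_X\nabla_YZ+\nabla_Y\nabla_XZ$. An immersion is biminimal with respect to $\lambda\in\mathbb{R}$ if $[\tau_2(\phi)]^\perp-\lambda[\tau(\phi)]^\perp=0$ ($\perp$ = normal component). For an arc-length curve on a surface of Gaussian curvature $G$ with signed curvature $k$, biminimality with respect to $\mu$ means $k''-k^3+kG-\mu k=0$ (here $G=-1$). *)

From Stdlib Require Import Reals.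
From Coquelicot Require Import Coquelicot.
Open Scope R_scope.

(* A point of R^n is a function nat -> R (only indices < n matter). *)
Definition point := nat -> R.

Fixpoint rsum (n : nat) (f : nat -> R) : R :=
  match n with O => 0 | S p => rsum p f + f p end.

Definition upd (x : point) (i : nat) (t : R) : point :=
  fun j => if Nat.eqb j i then t else x j.

Definition pd (i : nat) (f : point -> R) (x : point) : R :=
  Derive (fun t => f (upd x i t)) (x i).

Definition metric := point -> nat -> nat -> R.

Definition christoffel (n : nat) (g ginv : metric) (x : point) (k i j : nat) : R :=
  / 2 * rsum n (fun l => ginv x k l *
      (pd i (fun y => g y j l) x + pd j (fun y => g y i l) x
       - pd l (fun y => g y i j) x)).

(* Curvature with the paper's convention
   R(X,Y)Z = nabla_[X,Y] Z - nabla_X nabla_Y Z + nabla_Y nabla_X Z,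
   components: R(d_i,d_j)d_l = sum_k riem x k i j l d_k. *)
Definition riem (n : nat) (g ginv : metric) (x : point) (k i j l : nat) : R :=
  let G := christoffel n g ginv in
  - (pd i (fun y => G y k j l) x - pd j (fun y => G y k i l) x
     + rsum n (fun p => G x k i p * G x p j l - G x k j p * G x p i l)).

Definition inv2 (M : nat -> nat -> R) : nat -> nat -> R :=
  let d := M 0%nat 0%nat * M 1%nat 1%nat - M 0%nat 1%nat * M 1%nat 0%nat in
  fun a b => match a, b with
  | 0, 0 => M 1%nat 1%nat / d
  | 0, 1 => - M 0%nat 1%nat / d
  | 1, 0 => - M 1%nat 0%nat / d
  | 1, 1 => M 0%nat 0%nat / d
  | _, _ => 0 end.

Section Immersion.
Variables (n : nat) (g ginv : metric) (phi : point -> point).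

Definition dphi (a : nat) (u : point) (k : nat) : R := pd a (fun w => phi w k) u.

Definition ind_metric : metric := fun u a b =>
  rsum n (fun i => rsum n (fun j => g (phi u) i j * dphi a u i * dphi b u j)).
Definition ind_metric_inv : metric := fun u => inv2 (ind_metric u).
Definition ind_chr (u : point) (c a b : nat) : R :=
  christoffel 2 ind_metric ind_metric_inv u c a b.

(* sections of phi^{-1} TN: V u k = k-th component at parameter u *)
Definition section := point -> nat -> R.

Definition cov (a : nat) (V : section) : section := fun u k =>
  pd a (fun w => V w k) u
  + rsum n (fun i => rsum n (fun j =>
      christoffel n g ginv (phi u) k i j * dphi a u i * V u j)).

Definition tension : section := fun u k =>
  rsum 2 (fun a => rsum 2 (fun b => ind_metric_inv u a b *
    (cov a (dphi b) u k - rsum 2 (fun c => ind_chr u c a b * dphi c u k)))).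

Definition rough_lap (V : section) : section := fun u k =>
  rsum 2 (fun a => rsum 2 (fun b => ind_metric_inv u a b *
    (cov a (cov b V) u k - rsum 2 (fun c => ind_chr u c a b * cov c V u k)))).

Definition bitension : section := fun u k =>
  rough_lap tension u k
  + rsum 2 (fun a => rsum 2 (fun b => ind_metric_inv u a b *
      rsum n (fun i => rsum n (fun j => rsum n (fun l =>
        riem n g ginv (phi u) k i j l * dphi a u i * tension u j * dphi b u l))))).

Definition normal_part (V : section) : section := fun u k =>
  V u k - rsum 2 (fun a => rsum 2 (fun b => ind_metric_inv u a b *
    rsum n (fun i => rsum n (fun j => g (phi u) i j * V u i * dphi a u j))
    * dphi b u k)).

Definition biminimal (lambda : R) (D : point -> Prop) : Prop :=
  forall u, D u -> forall k, (k < n)%nat ->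
    normal_part bitension u k - lambda * normal_part tension u k = 0.
End Immersion.

(* SL2~(R) = R^3_+ with coordinates (x,y,z) = (x 0, x 1, x 2),
   ds^2 = (dx + dy/z)^2 + (dy^2 + dz^2)/z^2 *)
Definition sl2_metric : metric := fun x i j =>
  let z := x 2%nat in
  match i, j with
  | 0, 0 => 1
  | 0, 1 | 1, 0 => / z
  | 1, 1 => 2 / z ^ 2
  | 2, 2 => / z ^ 2
  | _, _ => 0 end.
Definition sl2_metric_inv : metric := fun x i j =>
  let z := x 2%nat in
  match i, j with
  | 0, 0 => 2
  | 0, 1 | 1, 0 => - z
  | 1, 1 => z ^ 2
  | 2, 2 => z ^ 2
  | _, _ => 0 end.

(* H^2 = upper half plane, coordinates (y,z) = (p 0, p 1), (dy^2+dz^2)/z^2 *)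
Definition hyp_metric : metric := fun p i j =>
  match i, j with
  | 0, 0 | 1, 1 => / (p 1%nat) ^ 2
  | _, _ => 0 end.
Definition hyp_metric_inv : metric := fun p i j =>
  match i, j with
  | 0, 0 | 1, 1 => (p 1%nat) ^ 2
  | _, _ => 0 end.

Definition vel (gam : R -> point) (s : R) (k : nat) : R := Derive (fun t => gam t k) s.

Definition acc (gam : R -> point) (s : R) (k : nat) : R :=
  Derive (fun t => vel gam t k) s
  + rsum 2 (fun i => rsum 2 (fun j =>
      christoffel 2 hyp_metric hyp_metric_inv (gam s) k i j
        * vel gam s i * vel gam s j)).

(* unit normal N = J T (rotation by +pi/2; conformal metric) *)
Definition unormal (gam : R -> point) (s : R) (k : nat) : R :=
  match k with 0 => - vel gam s 1%nat | 1 => vel gam s 0%nat | _ => 0 end.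

Definition signed_curv (gam : R -> point) (s : R) : R :=
  rsum 2 (fun i => rsum 2 (fun j =>
    hyp_metric (gam s) i j * acc gam s i * unormal gam s j)).

(* biminimal curve w.r.t. mu on a surface of Gaussian curvature G = -1:
   k'' - k^3 + k G - mu k = 0 *)
Definition biminimal_curve_H2 (gam : R -> point) (mu : R) (I : R -> Prop) : Prop :=
  forall s, I s ->
    let k := signed_curv gam in
    Derive_n k 2 s - (k s) ^ 3 + k s * (-1) - mu * k s = 0.

(* the vertical cylinder pi^{-1}(gamma(I)), parametrised by (s,t) = (u 0, u 1)
   as (s,t) |-> (t, gamma(s)) *)
Definition cylinder (gam : R -> point) : point -> point := fun u k =>
  match k with
  | 0 => u 1%nat
  | 1 => gam (u 0%nat) 0%nat
  | 2 => gam (u 0%nat) 1%nat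
  | _ => 0 end.

From Stdlib Require Import Reals Lra Lia.
From Coquelicot Require Import Coquelicot.
Open Scope R_scope.

(* Along the cylinder (s, t) |-> (t, gamma(s)) use the orthonormal frame E3 = d/dx (the
   fibre direction), T and N (the horizontal lifts of the unit tangent and the unit normal
   of gamma); N is the unit normal of the cylinder.  With k the curvature of gamma and c the
   y-component of the unit tangent in the frame (z d/dy, z d/dz), the Levi-Civita connection
   of SL2 acts on this frame by
     nabla_s E3 = N/2,   nabla_s T = (k + c/2) N,   nabla_s N = - E3/2 - (k + c/2) T,
     nabla_t E3 = 0,     nabla_t T = N/2,           nabla_t N = - T/2,
   and trace R(dphi, p E3 + q T + r N) dphi = p/4 E3 + q/4 T - 3r/2 N.  Hence
   tau = k N, the rough Laplacian of tau is - k' E3 - 3 k k' T + (k'' - k/2 - k^3) N, and the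
   normal part of tau_2 - lambda tau is (k'' - k^3 - (2 + lambda) k) N. *)

Lemma upd_same (x : point) i t : upd x i t i = t.
Proof. unfold upd. now rewrite Nat.eqb_refl. Qed.

Lemma upd_other (x : point) i j t : j <> i -> upd x i t j = x j.
Proof. intros Hji. unfold upd. now destruct (Nat.eqb_spec j i). Qed.

Section CoordinateFunction.
Variables (D : R -> Prop) (F : R -> R) (f : point -> R) (m : nat).
Hypothesis f_coord : forall y, D (y m) -> f y = F (y m).

Lemma pd_coord_same (x : point) l :
  open D -> D (x m) -> is_derive F (x m) l -> pd m f x = l.
Proof.
  intros HD Hx HF. unfold pd.
  rewrite (Derive_ext_loc _ F); [now apply is_derive_unique|].
  apply (filter_imp D); [|now apply HD].
  intros t Ht. rewrite f_coord; rewrite upd_same; auto.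
Qed.

Lemma pd_coord_other (x : point) i : D (x m) -> i <> m -> pd i f x = 0.
Proof.
  intros Hx Him. unfold pd.
  rewrite (Derive_ext _ (fun _ => F (x m))); [apply Derive_const|].
  intros t. rewrite f_coord; rewrite upd_other; auto.
Qed.

Lemma pd_coord_fun (x : point) i l :
  open D -> D (x m) -> is_derive F (x m) l -> pd i f x = if Nat.eqb i m then l else 0.
Proof.
  intros HD Hx HF. destruct (Nat.eqb_spec i m) as [->|Him].
  - now apply pd_coord_same.
  - now apply pd_coord_other.
Qed.
End CoordinateFunction.

Lemma open_pos : open (fun t : R => 0 < t).
Proof. intros x Hx. exact (open_Rbar_gt (Finite 0) x Hx). Qed.

Lemma is_derive_constant (c s : R) : is_derive (fun _ => c) s 0.
Proof. exact (is_derive_const c s). Qed.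

Ltac nonzero := repeat split;
  repeat match goal with
  | |- _ * _ <> 0 => apply Rmult_integral_contrapositive_currified
  | |- _ ^ _ <> 0 => apply pow_nonzero
  end; try lra.

Definition sl2_dmetric (i j : nat) (z : R) : R :=
  match i, j with
  | 0, 1 | 1, 0 => - / z ^ 2
  | 1, 1 => - 4 / z ^ 3
  | 2, 2 => - 2 / z ^ 3
  | _, _ => 0
  end.

Definition sl2_chr (k i j : nat) (z : R) : R :=
  match k, i, j with
  | 0, 0, 2 | 0, 2, 0 => / (2 * z)
  | 0, 1, 2 | 0, 2, 1 => / z ^ 2
  | 1, 0, 2 | 1, 2, 0 => - / 2
  | 1, 1, 2 | 1, 2, 1 => - 3 / (2 * z)
  | 2, 0, 1 | 2, 1, 0 => / 2
  | 2, 1, 1 => 2 / z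
  | 2, 2, 2 => - / z
  | _, _, _ => 0
  end.

Definition sl2_dchr (k i j : nat) (z : R) : R :=
  match k, i, j with
  | 0, 0, 2 | 0, 2, 0 => - / (2 * z ^ 2)
  | 0, 1, 2 | 0, 2, 1 => - 2 / z ^ 3
  | 1, 1, 2 | 1, 2, 1 => 3 / (2 * z ^ 2)
  | 2, 1, 1 => - 2 / z ^ 2
  | 2, 2, 2 => / z ^ 2
  | _, _, _ => 0
  end.

Definition sl2_riem (k i j l : nat) (z : R) : R :=
  match k, i, j, l with
  | 0, 0, 1, 0 => - / (4 * z)      | 0, 1, 0, 0 => / (4 * z)
  | 0, 0, 1, 1 => - / (2 * z ^ 2)  | 0, 1, 0, 1 => / (2 * z ^ 2)
  | 0, 0, 2, 2 => - / (4 * z ^ 2)  | 0, 2, 0, 2 => / (4 * z ^ 2)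
  | 0, 1, 2, 2 => - 2 / z ^ 3      | 0, 2, 1, 2 => 2 / z ^ 3
  | 1, 0, 1, 0 => / 4              | 1, 1, 0, 0 => - / 4
  | 1, 0, 1, 1 => / (4 * z)        | 1, 1, 0, 1 => - / (4 * z)
  | 1, 1, 2, 2 => 7 / (4 * z ^ 2)  | 1, 2, 1, 2 => - 7 / (4 * z ^ 2)
  | 2, 0, 2, 0 => / 4              | 2, 2, 0, 0 => - / 4
  | 2, 0, 2, 1 => / (4 * z)        | 2, 2, 0, 1 => - / (4 * z)
  | 2, 1, 2, 0 => / (4 * z)        | 2, 2, 1, 0 => - / (4 * z)
  | 2, 1, 2, 1 => - 3 / (2 * z ^ 2) | 2, 2, 1, 1 => 3 / (2 * z ^ 2)
  | _, _, _, _ => 0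
  end.

Lemma pd_sl2_metric (x : point) l i j : 0 < x 2%nat ->
  pd l (fun y => sl2_metric y i j) x = if Nat.eqb l 2 then sl2_dmetric i j (x 2%nat) else 0.
Proof.
  intros Hx. apply (pd_coord_fun (fun t => 0 < t) (fun z => sl2_metric (fun _ => z) i j));
    [reflexivity | exact open_pos | exact Hx |].
  destruct i as [|[|[|i]]]; destruct j as [|[|[|j]]]; cbn;
    auto_derive; try nonzero; try (field; nonzero); ring.
Qed.

Lemma sl2_christoffel (x : point) k i j : 0 < x 2%nat ->
  christoffel 3 sl2_metric sl2_metric_inv x k i j = sl2_chr k i j (x 2%nat).
Proof.
  intros Hx. unfold christoffel. cbn [rsum]. rewrite !(pd_sl2_metric x _ _ _ Hx).
  unfold sl2_metric_inv, sl2_metric.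
  destruct k as [|[|[|k]]]; destruct i as [|[|[|i]]]; destruct j as [|[|[|j]]];
    cbn; try (field; nonzero); ring.
Qed.

Lemma pd_sl2_christoffel (x : point) l k i j : 0 < x 2%nat ->
  pd l (fun y => christoffel 3 sl2_metric sl2_metric_inv y k i j) x
  = if Nat.eqb l 2 then sl2_dchr k i j (x 2%nat) else 0.
Proof.
  intros Hx. apply (pd_coord_fun (fun t => 0 < t) (fun t => sl2_chr k i j t));
    [intros y Hy; now apply sl2_christoffel | exact open_pos | exact Hx |].
  destruct k as [|[|[|k]]]; destruct i as [|[|[|i]]]; destruct j as [|[|[|j]]]; cbn;
    auto_derive; try nonzero; try (field; nonzero); ring.
Qed.

Lemma sl2_curvature (x : point) k i j l : 0 < x 2%nat ->
  riem 3 sl2_metric sl2_metric_inv x k i j l = sl2_riem k i j l (x 2%nat).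
Proof.
  intros Hx. unfold riem. cbn [rsum].
  rewrite !(pd_sl2_christoffel x _ _ _ _ Hx), !(sl2_christoffel x _ _ _ Hx).
  destruct k as [|[|[|k]]]; destruct i as [|[|[|i]]]; destruct j as [|[|[|j]]];
    destruct l as [|[|[|l]]]; cbn; try (field; nonzero); ring.
Qed.

Definition hyp_chr (k i j : nat) (z : R) : R :=
  match k, i, j with
  | 0, 0, 1 | 0, 1, 0 | 1, 1, 1 => - / z
  | 1, 0, 0 => / z
  | _, _, _ => 0
  end.

Lemma pd_hyp_metric (p : point) l i j : 0 < p 1%nat ->
  pd l (fun y => hyp_metric y i j) p
  = if Nat.eqb l 1 then - 2 / p 1%nat * hyp_metric p i j else 0.
Proof.
  intros Hp. apply (pd_coord_fun (fun t => 0 < t) (fun z => hyp_metric (fun _ => z) i j));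
    [reflexivity | exact open_pos | exact Hp |].
  destruct i as [|[|i]]; destruct j as [|[|j]]; cbn;
    auto_derive; try nonzero; try (field; nonzero); ring.
Qed.

Lemma hyp_christoffel (p : point) k i j : 0 < p 1%nat ->
  christoffel 2 hyp_metric hyp_metric_inv p k i j = hyp_chr k i j (p 1%nat).
Proof.
  intros Hp. unfold christoffel. cbn [rsum]. rewrite !(pd_hyp_metric p _ _ _ Hp).
  unfold hyp_metric_inv, hyp_metric.
  destruct k as [|[|k]]; destruct i as [|[|i]]; destruct j as [|[|j]];
    cbn; try (field; nonzero); ring.
Qed.

Definition height (gam : R -> point) (s : R) : R := gam s 1%nat.

Definition jet (gam : R -> point) (i m : nat) (s : R) : R := Derive_n (fun t => gam t i) m s.

(* Components of the unit tangent in the orthonormal frame (z d/dy, z d/dz) of H^2. *)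
Definition tan_y (gam : R -> point) (s : R) : R := jet gam 0 1 s / height gam s.
Definition tan_z (gam : R -> point) (s : R) : R := jet gam 1 1 s / height gam s.

Definition turning (gam : R -> point) (s : R) : R :=
  (jet gam 0 1 s * jet gam 1 2 s - jet gam 1 1 s * jet gam 0 2 s) / height gam s ^ 2.

Definition turning_deriv (gam : R -> point) (s : R) : R :=
  (jet gam 0 1 s * jet gam 1 3 s - jet gam 1 1 s * jet gam 0 3 s) / height gam s ^ 2
  - 2 * (jet gam 0 1 s * jet gam 1 2 s - jet gam 1 1 s * jet gam 0 2 s) * jet gam 1 1 s
    / height gam s ^ 3.

Section Cylinder.
Variables (gam : R -> point) (I : R -> Prop).
Hypothesis I_open : open I.
Hypothesis gam_smooth : forall (k m : nat) (s : R), I s -> (k < 2)%nat ->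
  ex_derive_n (fun t => gam t k) m s.
Hypothesis gam_pos : forall s, I s -> 0 < gam s 1%nat.
Hypothesis gam_unit : forall s, I s ->
  rsum 2 (fun i => rsum 2 (fun j => hyp_metric (gam s) i j * vel gam s i * vel gam s j)) = 1.

Lemma height_pos s : I s -> 0 < height gam s.
Proof. exact (gam_pos s). Qed.

Lemma ex_derive_jet i m s : I s -> (i < 2)%nat -> ex_derive (jet gam i m) s.
Proof. intros Hs Hi. exact (gam_smooth i (S m) s Hs Hi). Qed.

Lemma ex_derive_height s : I s -> ex_derive (height gam) s.
Proof. intros Hs. exact (gam_smooth 1 1 s Hs ltac:(lia)). Qed.

Lemma Derive_jet i m s : Derive (jet gam i m) s = jet gam i (S m) s.
Proof. reflexivity. Qed.

Lemma Derive_height s : Derive (fun x => height gam x) s = jet gam 1 1 s.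
Proof. reflexivity. Qed.

(* The identities [jet_speed], [jet_speed_deriv] and [tan_unit] are oriented as rewrite
   rules for [field [...]], which reduces modulo them. *)
Lemma jet_speed s : I s -> jet gam 1 1 s ^ 2 = height gam s ^ 2 - jet gam 0 1 s ^ 2.
Proof.
  intros Hs. pose proof (height_pos s Hs). pose proof (gam_unit s Hs) as Hunit.
  cbn [rsum] in Hunit. unfold hyp_metric in Hunit.
  change (vel gam s ?i) with (jet gam i 1 s) in Hunit.
  change (gam s 1%nat) with (height gam s) in Hunit.
  enough (jet gam 0 1 s ^ 2 + jet gam 1 1 s ^ 2 = height gam s ^ 2) by lra.
  transitivity (height gam s ^ 2 * 1); [rewrite <- Hunit; field; nonzero | ring].
Qed.

Lemma jet_speed_deriv s : I s ->
  jet gam 0 1 s * jet gam 0 2 s = height gam s * jet gam 1 1 s - jet gam 1 1 s * jet gam 1 2 s.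
Proof.
  intros Hs.
  assert (Hd : Derive (fun t => jet gam 0 1 t ^ 2 + jet gam 1 1 t ^ 2 - height gam t ^ 2) s =
    (2 * (jet gam 0 1 s * jet gam 0 2 s + jet gam 1 1 s * jet gam 1 2 s
          - height gam s * jet gam 1 1 s))).
  { apply is_derive_unique. auto_derive.
    - repeat split; auto using ex_derive_jet, ex_derive_height.
    - rewrite !Derive_jet, Derive_height. ring. }
  assert (H0 : Derive (fun t => jet gam 0 1 t ^ 2 + jet gam 1 1 t ^ 2 - height gam t ^ 2) s = 0).
  { rewrite (Derive_ext_loc _ (fun _ => 0)); [apply Derive_const|].
    eapply filter_imp; [|apply I_open; exact Hs].
    intros t Ht. rewrite (jet_speed t Ht). ring. }
  rewrite Hd in H0. lra.
Qed.

Lemma tan_unit s : I s -> tan_z gam s ^ 2 = 1 - tan_y gam s ^ 2.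
Proof.
  intros Hs. pose proof (height_pos s Hs). pose proof (jet_speed s Hs) as Hv.
  unfold tan_y, tan_z. field [Hv]. nonzero.
Qed.

Lemma signed_curv_jets s : I s -> signed_curv gam s = tan_y gam s + turning gam s.
Proof.
  intros Hs. pose proof (height_pos s Hs).
  unfold signed_curv, acc, unormal. cbn [rsum].
  rewrite !(hyp_christoffel (gam s)) by assumption.
  unfold hyp_metric, hyp_chr, tan_y, turning. cbv beta iota.
  change (Derive (fun t => vel gam t ?i) s) with (jet gam i 2 s).
  change (vel gam s ?i) with (jet gam i 1 s).
  change (gam s 1%nat) with (height gam s).
  pose proof (jet_speed s Hs) as Hv. field [Hv]. nonzero.
Qed.
Lemma is_derive_turning s : I s -> is_derive (turning gam) s (turning_deriv gam s).
Proof.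
  intros Hs. pose proof (height_pos s Hs). unfold turning. auto_derive.
  - repeat split; auto using ex_derive_jet, ex_derive_height; nonzero.
  - rewrite !Derive_jet, Derive_height. unfold turning_deriv. field. nonzero.
Qed.

Lemma is_derive_tan_y s : I s ->
  is_derive (tan_y gam) s (- tan_z gam s * (signed_curv gam s - tan_y gam s)).
Proof.
  intros Hs. pose proof (height_pos s Hs).
  rewrite signed_curv_jets by exact Hs. unfold tan_y at 1. auto_derive.
  - repeat split; auto using ex_derive_jet, ex_derive_height; nonzero.
  - rewrite Derive_jet, Derive_height. unfold tan_y, tan_z, turning.
    pose proof (jet_speed s Hs) as Hv. pose proof (jet_speed_deriv s Hs) as Ha.
    field [Hv Ha]. nonzero.
Qed.
Lemma is_derive_tan_z s : I s ->
  is_derive (tan_z gam) s (tan_y gam s * (signed_curv gam s - tan_y gam s)).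
Proof.
  intros Hs. pose proof (height_pos s Hs).
  rewrite signed_curv_jets by exact Hs. unfold tan_z at 1. auto_derive.
  - repeat split; auto using ex_derive_jet, ex_derive_height; nonzero.
  - rewrite Derive_jet, Derive_height. unfold tan_y, tan_z, turning.
    pose proof (jet_speed s Hs) as Hv. pose proof (jet_speed_deriv s Hs) as Ha.
    field [Hv Ha]. nonzero.
Qed.

Lemma signed_curv_loc s : I s ->
  locally s (fun t => tan_y gam t + turning gam t = signed_curv gam t).
Proof.
  intros Hs. eapply filter_imp; [|apply I_open; exact Hs].
  intros t Ht. symmetry. now apply signed_curv_jets.
Qed.

Lemma ex_derive_tan_y s : I s -> ex_derive (tan_y gam) s.
Proof. intros Hs. eexists. now apply is_derive_tan_y. Qed.

Lemma ex_derive_tan_z s : I s -> ex_derive (tan_z gam) s.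
Proof. intros Hs. eexists. now apply is_derive_tan_z. Qed.

Lemma ex_derive_turning s : I s -> ex_derive (turning gam) s.
Proof. intros Hs. eexists. now apply is_derive_turning. Qed.

Lemma Derive_tan_y s : I s ->
  Derive (fun t => tan_y gam t) s = - tan_z gam s * (signed_curv gam s - tan_y gam s).
Proof. intros Hs. now apply is_derive_unique, is_derive_tan_y. Qed.

Lemma Derive_tan_z s : I s ->
  Derive (fun t => tan_z gam t) s = tan_y gam s * (signed_curv gam s - tan_y gam s).
Proof. intros Hs. now apply is_derive_unique, is_derive_tan_z. Qed.

Lemma Derive_signed_curv s : I s ->
  Derive (signed_curv gam) s = - tan_z gam s * turning gam s + turning_deriv gam s.
Proof.
  intros Hs. rewrite <- (Derive_ext_loc _ _ _ (signed_curv_loc s Hs)).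
  rewrite Derive_plus by auto using ex_derive_tan_y, ex_derive_turning.
  rewrite (is_derive_unique _ _ _ (is_derive_tan_y s Hs)),
    (is_derive_unique _ _ _ (is_derive_turning s Hs)), (signed_curv_jets s Hs).
  ring.
Qed.

Lemma is_derive_signed_curv s : I s ->
  is_derive (signed_curv gam) s (Derive_n (signed_curv gam) 1 s).
Proof.
  intros Hs. apply Derive_correct.
  apply (ex_derive_ext_loc (fun t => tan_y gam t + turning gam t)); [now apply signed_curv_loc|].
  auto_derive. auto using ex_derive_tan_y, ex_derive_turning.
Qed.

Lemma is_derive_signed_curv_deriv s : I s ->
  is_derive (Derive_n (signed_curv gam) 1) s (Derive_n (signed_curv gam) 2 s).
Proof.
  intros Hs. apply Derive_correct.
  apply (ex_derive_ext_loc (fun t => - tan_z gam t * turning gam t + turning_deriv gam t)).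
  - eapply filter_imp; [|apply I_open; exact Hs].
    intros t Ht. symmetry. now apply Derive_signed_curv.
  - pose proof (height_pos s Hs). unfold turning_deriv. auto_derive.
    repeat split; auto using ex_derive_jet, ex_derive_height, ex_derive_tan_z, ex_derive_turning;
      nonzero.
Qed.

(* [frame_vec s p q r] is p E3 + q T + r N at gamma(s), in the coordinates (x, y, z):
   E3 = (1, 0, 0), T = (- c, z c, z d), N = (d, - z d, z c) with c, d = tan_y, tan_z. *)
Definition frame_vec (s p q r : R) : nat -> R := fun k =>
  match k with
  | 0 => p - q * tan_y gam s + r * tan_z gam s
  | 1 => height gam s * (q * tan_y gam s - r * tan_z gam s)
  | 2 => height gam s * (q * tan_z gam s + r * tan_y gam s)
  | _ => 0
  end.

Lemma is_derive_frame_vec (p q r : R -> R) p' q' r' s k : I s ->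
  is_derive p s p' -> is_derive q s q' -> is_derive r s r' ->
  is_derive (fun t => frame_vec t (p t) (q t) (r t) k) s
    (frame_vec s (p' + q s * tan_y gam s * tan_z gam s - r s * tan_z gam s ^ 2)
       (q' + q s * tan_z gam s - r s * (signed_curv gam s - tan_y gam s))
       (r' + q s * (signed_curv gam s - tan_y gam s) + r s * tan_z gam s) k).
Proof.
  intros Hs Hp Hq Hr.
  assert (Ep : Derive (fun x => p x) s = p') by now apply is_derive_unique.
  assert (Eq : Derive (fun x => q x) s = q') by now apply is_derive_unique.
  assert (Er : Derive (fun x => r x) s = r') by now apply is_derive_unique.
  assert (Ez : Derive (fun x => height gam x) s = height gam s * tan_z gam s).
  { pose proof (height_pos s Hs). rewrite Derive_height. unfold tan_z. field. nonzero. }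
  pose proof (tan_unit s Hs) as Hd.
  destruct k as [|[|[|k]]]; cbn [frame_vec]; auto_derive;
    try (repeat split; try (eexists; eassumption);
         auto using ex_derive_height, ex_derive_tan_y, ex_derive_tan_z; fail);
    rewrite ?Ep, ?Eq, ?Er, ?Ez, ?(Derive_tan_y s Hs), ?(Derive_tan_z s Hs); ring [Hd].
Qed.

Lemma cylinder_height u : cylinder gam u 2%nat = height gam (u 0%nat).
Proof. reflexivity. Qed.

Lemma dphi_cylinder u a k : I (u 0%nat) ->
  dphi (cylinder gam) a u k
  = frame_vec (u 0%nat) (match a with 0 => tan_y gam (u 0%nat) | 1 => 1 | _ => 0 end)
      (match a with 0 => 1 | _ => 0 end) 0 k.
Proof.
  intros Hu. pose proof (height_pos _ Hu).
  unfold dphi, pd, upd, frame_vec, tan_y.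
  destruct a as [|[|a]]; destruct k as [|[|[|k]]]; cbn [cylinder Nat.eqb];
    rewrite ?Derive_const, ?Derive_id; try ring.
  - change (Derive (fun t => gam t 0%nat) (u 0%nat)) with (jet gam 0 1 (u 0%nat)).
    field. nonzero.
  - change (Derive (fun t => gam t 1%nat) (u 0%nat)) with (jet gam 1 1 (u 0%nat)).
    unfold tan_z. field. nonzero.
Qed.

Definition cyl_metric (s : R) (a b : nat) : R :=
  match a, b with
  | 0, 0 => 1 + tan_y gam s ^ 2
  | 0, 1 | 1, 0 => tan_y gam s
  | 1, 1 => 1
  | _, _ => 0
  end.

Definition cyl_metric_inv (s : R) (a b : nat) : R :=
  match a, b with
  | 0, 0 => 1
  | 0, 1 | 1, 0 => - tan_y gam s
  | 1, 1 => 1 + tan_y gam s ^ 2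
  | _, _ => 0
  end.

Lemma ind_metric_cylinder u a b : I (u 0%nat) ->
  ind_metric 3 sl2_metric (cylinder gam) u a b = cyl_metric (u 0%nat) a b.
Proof.
  intros Hu. pose proof (height_pos _ Hu). pose proof (tan_unit _ Hu) as Hd.
  unfold ind_metric. cbn [rsum]. rewrite !dphi_cylinder by exact Hu.
  unfold sl2_metric. rewrite cylinder_height.
  destruct a as [|[|a]]; destruct b as [|[|b]]; cbn [frame_vec cyl_metric];
    try ring; field [Hd]; nonzero.
Qed.

Lemma ind_metric_inv_cylinder u a b : I (u 0%nat) ->
  ind_metric_inv 3 sl2_metric (cylinder gam) u a b = cyl_metric_inv (u 0%nat) a b.
Proof.
  intros Hu. unfold ind_metric_inv, inv2. rewrite !ind_metric_cylinder by exact Hu.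
  assert (Hdet : cyl_metric (u 0%nat) 0 0 * cyl_metric (u 0%nat) 1 1
                 - cyl_metric (u 0%nat) 0 1 * cyl_metric (u 0%nat) 1 0 = 1)
    by (cbn; ring).
  destruct a as [|[|a]]; destruct b as [|[|b]]; cbv zeta; rewrite ?Hdet;
    cbn [cyl_metric cyl_metric_inv]; field.
Qed.

Lemma pd_ind_metric_cylinder u i a b : I (u 0%nat) ->
  pd i (fun w => ind_metric 3 sl2_metric (cylinder gam) w a b) u
  = if Nat.eqb i 0 then
      match a, b with
      | 0, 0 => 2 * tan_y gam (u 0%nat) * Derive (fun t => tan_y gam t) (u 0%nat)
      | 0, 1 | 1, 0 => Derive (fun t => tan_y gam t) (u 0%nat)
      | _, _ => 0
      end
    else 0.
Proof.
  intros Hu. apply (pd_coord_fun I (fun s => cyl_metric s a b)); auto.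
  - intros y Hy. now apply ind_metric_cylinder.
  - destruct a as [|[|a]]; destruct b as [|[|b]]; cbn [cyl_metric]; auto_derive;
      auto using ex_derive_tan_y; ring.
Qed.

Lemma ind_chr_cylinder u c a b : I (u 0%nat) ->
  ind_chr 3 sl2_metric (cylinder gam) u c a b
  = match c, a, b with
    | 1, 0, 0 => Derive (fun t => tan_y gam t) (u 0%nat)
    | _, _, _ => 0
    end.
Proof.
  intros Hu. unfold ind_chr, christoffel. cbn [rsum].
  rewrite !pd_ind_metric_cylinder, !ind_metric_inv_cylinder by exact Hu.
  destruct c as [|[|c]]; destruct a as [|[|a]]; destruct b as [|[|b]];
    cbn [cyl_metric_inv Nat.eqb]; field.
Qed.

Section FrameField.
Variables (V : section) (p q r : R -> R).
Hypothesis V_frame : forall w, I (w 0%nat) -> forall k,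
  V w k = frame_vec (w 0%nat) (p (w 0%nat)) (q (w 0%nat)) (r (w 0%nat)) k.

Lemma cov_s_frame_vec u p' q' r' k : I (u 0%nat) ->
  is_derive p (u 0%nat) p' -> is_derive q (u 0%nat) q' -> is_derive r (u 0%nat) r' ->
  cov 3 sl2_metric sl2_metric_inv (cylinder gam) 0 V u k =
  let s := u 0%nat in
  let h := signed_curv gam s + tan_y gam s / 2 in
  frame_vec s (p' - r s / 2) (q' - r s * h) (r' + p s / 2 + q s * h) k.
Proof.
  intros Hu Hp Hq Hr. pose proof (height_pos _ Hu). pose proof (tan_unit _ Hu) as Hd.
  unfold cov. cbn [rsum].
  rewrite (pd_coord_same I (fun s => frame_vec s (p s) (q s) (r s) k) (fun w : point => V w k) 0
             (fun w Hw => V_frame w Hw k) u _ I_open Hu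
             (is_derive_frame_vec p q r p' q' r' _ k Hu Hp Hq Hr)).
  rewrite !sl2_christoffel by exact (height_pos _ Hu).
  rewrite !dphi_cylinder, !V_frame by exact Hu. rewrite cylinder_height.
  cbv zeta. destruct k as [|[|[|k]]]; cbn [frame_vec sl2_chr]; field [Hd]; nonzero.
Qed.

Lemma cov_t_frame_vec u k : I (u 0%nat) ->
  cov 3 sl2_metric sl2_metric_inv (cylinder gam) 1 V u k =
  frame_vec (u 0%nat) 0 (- r (u 0%nat) / 2) (q (u 0%nat) / 2) k.
Proof.
  intros Hu. pose proof (height_pos _ Hu). pose proof (tan_unit _ Hu) as Hd.
  unfold cov. cbn [rsum].
  rewrite (pd_coord_other I (fun s => frame_vec s (p s) (q s) (r s) k) (fun w : point => V w k)
             0 (fun w Hw => V_frame w Hw k)) by (exact Hu || lia).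
  rewrite !sl2_christoffel by exact (height_pos _ Hu).
  rewrite !dphi_cylinder, !V_frame by exact Hu. rewrite cylinder_height.
  destruct k as [|[|[|k]]]; cbn [frame_vec sl2_chr]; field [Hd]; nonzero.
Qed.
End FrameField.

Lemma cov_dphi_cylinder u a b k : I (u 0%nat) -> (a < 2)%nat -> (b < 2)%nat ->
  cov 3 sl2_metric sl2_metric_inv (cylinder gam) a (dphi (cylinder gam) b) u k
  = match a, b with
    | 0, 0 => frame_vec (u 0%nat) (Derive (fun t => tan_y gam t) (u 0%nat)) 0
                (signed_curv gam (u 0%nat) + tan_y gam (u 0%nat)) k
    | 1, 1 => 0
    | _, _ => frame_vec (u 0%nat) 0 0 (/ 2) k
    end.
Proof.
  intros Hu Ha Hb.
  set (p := fun s => match b with 0 => tan_y gam s | 1 => 1 | _ => 0 end).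
  set (q := fun _ : R => match b with 0 => 1 | _ => 0 end).
  pose proof (fun w Hw k => dphi_cylinder w b k Hw) as Hframe.
  destruct a as [|[|a]]; [|rewrite (cov_t_frame_vec _ p q (fun _ => 0) Hframe) by exact Hu|lia].
  - assert (Hp : is_derive p (u 0%nat)
                   (match b with 0 => Derive (fun t => tan_y gam t) (u 0%nat) | _ => 0 end)).
    { destruct b as [|[|b]]; [apply Derive_correct, ex_derive_tan_y, Hu
                             | apply is_derive_constant | lia]. }
    rewrite (cov_s_frame_vec _ p q (fun _ => 0) Hframe u _ 0 0 k Hu Hp
               (is_derive_constant _ _) (is_derive_constant _ _)).
    destruct b as [|[|b]]; [..|lia]; cbv zeta; unfold p, q; destruct k as [|[|[|k]]];
      cbn [frame_vec]; field.
  - destruct b as [|[|b]]; [..|lia]; unfold p, q; destruct k as [|[|[|k]]];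
      cbn [frame_vec]; field.
Qed.

Lemma tension_cylinder u k : I (u 0%nat) ->
  tension 3 sl2_metric sl2_metric_inv (cylinder gam) u k
  = frame_vec (u 0%nat) 0 0 (signed_curv gam (u 0%nat)) k.
Proof.
  intros Hu. unfold tension. cbn [rsum].
  rewrite !cov_dphi_cylinder by (exact Hu || lia).
  rewrite !ind_metric_inv_cylinder, !ind_chr_cylinder, !dphi_cylinder by exact Hu.
  destruct k as [|[|[|k]]]; cbn [frame_vec cyl_metric_inv]; field.
Qed.

Lemma cov_tension_cylinder u a k : I (u 0%nat) -> (a < 2)%nat ->
  cov 3 sl2_metric sl2_metric_inv (cylinder gam) a
    (tension 3 sl2_metric sl2_metric_inv (cylinder gam)) u k
  = let s := u 0%nat in
    let K := signed_curv gam s in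
    match a with
    | 0 => frame_vec s (- K / 2) (- K * (K + tan_y gam s / 2))
             (Derive_n (signed_curv gam) 1 s) k
    | _ => frame_vec s 0 (- K / 2) 0 k
    end.
Proof.
  intros Hu Ha. pose proof (fun w Hw k => tension_cylinder w k Hw) as Hframe.
  destruct a as [|[|a]];
    [|rewrite (cov_t_frame_vec _ (fun _ => 0) (fun _ => 0) (signed_curv gam) Hframe) by exact Hu
     |lia].
  - rewrite (cov_s_frame_vec _ (fun _ => 0) (fun _ => 0) (signed_curv gam) Hframe u 0 0 _ k Hu
               (is_derive_constant _ _) (is_derive_constant _ _) (is_derive_signed_curv _ Hu)).
    cbv zeta. destruct k as [|[|[|k]]]; cbn [frame_vec]; field.
  - cbv zeta. destruct k as [|[|[|k]]]; cbn [frame_vec]; field.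
Qed.

Lemma rough_lap_tension_cylinder u k : I (u 0%nat) ->
  rough_lap 3 sl2_metric sl2_metric_inv (cylinder gam)
    (tension 3 sl2_metric sl2_metric_inv (cylinder gam)) u k
  = let s := u 0%nat in
    let K := signed_curv gam s in
    let K' := Derive_n (signed_curv gam) 1 s in
    frame_vec s (- K') (- 3 * K * K') (Derive_n (signed_curv gam) 2 s - K / 2 - K ^ 3) k.
Proof.
  intros Hu. set (s := u 0%nat).
  set (K := signed_curv gam). set (K' := Derive_n K 1).
  assert (HK : ex_derive K s) by (eexists; now apply is_derive_signed_curv).
  assert (EK : Derive (fun t => K t) s = K' s) by reflexivity.
  set (p0 := fun t => - K t / 2). set (q0 := fun t => - K t * (K t + tan_y gam t / 2)).
  set (q1 := fun t => - K t / 2).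
  assert (Hp0 : is_derive p0 s (- K' s / 2))
    by (unfold p0; auto_derive; [exact HK | rewrite EK; field]).
  assert (Hq0 : is_derive q0 s (- K' s * (K s + tan_y gam s / 2)
                                - K s * (K' s + Derive (fun t => tan_y gam t) s / 2)))
    by (unfold q0; auto_derive; [auto using ex_derive_tan_y | rewrite EK; field]).
  assert (Hr0 : is_derive K' s (Derive_n K 2 s)) by now apply is_derive_signed_curv_deriv.
  assert (Hq1 : is_derive q1 s (- K' s / 2))
    by (unfold q1; auto_derive; [exact HK | rewrite EK; field]).
  unfold rough_lap. cbn [rsum].
  rewrite (cov_s_frame_vec _ p0 q0 K'
             (fun w Hw k => cov_tension_cylinder w 0 k Hw ltac:(lia)) u _ _ _ k Hu Hp0 Hq0 Hr0).
  rewrite (cov_s_frame_vec _ (fun _ => 0) q1 (fun _ => 0)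
             (fun w Hw k => cov_tension_cylinder w 1 k Hw ltac:(lia)) u _ _ _ k Hu
             (is_derive_constant _ _) Hq1 (is_derive_constant _ _)).
  rewrite (cov_t_frame_vec _ p0 q0 K' (fun w Hw k => cov_tension_cylinder w 0 k Hw ltac:(lia)))
    by exact Hu.
  rewrite (cov_t_frame_vec _ (fun _ => 0) q1 (fun _ => 0)
             (fun w Hw k => cov_tension_cylinder w 1 k Hw ltac:(lia))) by exact Hu.
  rewrite !ind_metric_inv_cylinder, !ind_chr_cylinder, !cov_tension_cylinder by (exact Hu || lia).
  unfold p0, q0, q1, K', K, s. cbv zeta.
  destruct k as [|[|[|k]]]; cbn [frame_vec cyl_metric_inv]; field.
Qed.

Lemma curvature_trace_frame (v : nat -> R) p q r u k : I (u 0%nat) ->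
  (forall j, v j = frame_vec (u 0%nat) p q r j) ->
  rsum 2 (fun a => rsum 2 (fun b => ind_metric_inv 3 sl2_metric (cylinder gam) u a b *
    rsum 3 (fun i => rsum 3 (fun j => rsum 3 (fun l =>
      riem 3 sl2_metric sl2_metric_inv (cylinder gam u) k i j l
      * dphi (cylinder gam) a u i * v j * dphi (cylinder gam) b u l)))))
  = frame_vec (u 0%nat) (p / 4) (q / 4) (- 3 / 2 * r) k.
Proof.
  intros Hu Hv. pose proof (height_pos _ Hu). pose proof (tan_unit _ Hu) as Hd.
  cbn [rsum]. rewrite !sl2_curvature by exact (height_pos _ Hu).
  rewrite !Hv, !ind_metric_inv_cylinder, !dphi_cylinder by exact Hu. rewrite cylinder_height.
  destruct k as [|[|[|k]]]; cbn [frame_vec sl2_riem cyl_metric_inv]; field [Hd]; nonzero.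
Qed.

Lemma bitension_cylinder u k : I (u 0%nat) ->
  bitension 3 sl2_metric sl2_metric_inv (cylinder gam) u k
  = let s := u 0%nat in
    let K := signed_curv gam s in
    let K' := Derive_n (signed_curv gam) 1 s in
    frame_vec s (- K') (- 3 * K * K') (Derive_n (signed_curv gam) 2 s - 2 * K - K ^ 3) k.
Proof.
  intros Hu. unfold bitension.
  rewrite rough_lap_tension_cylinder by exact Hu.
  rewrite (curvature_trace_frame _ 0 0 (signed_curv gam (u 0%nat)) u k Hu)
    by (intros j; now apply tension_cylinder).
  cbv zeta. destruct k as [|[|[|k]]]; cbn [frame_vec]; field.
Qed.

Lemma normal_part_frame (V : section) p q r u k : I (u 0%nat) ->
  (forall j, V u j = frame_vec (u 0%nat) p q r j) ->
  normal_part 3 sl2_metric (cylinder gam) V u k = frame_vec (u 0%nat) 0 0 r k.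
Proof.
  intros Hu HV. pose proof (height_pos _ Hu). pose proof (tan_unit _ Hu) as Hd.
  unfold normal_part. cbn [rsum].
  rewrite !HV, !ind_metric_inv_cylinder, !dphi_cylinder by exact Hu.
  unfold sl2_metric. rewrite cylinder_height.
  destruct k as [|[|[|k]]]; cbn [frame_vec cyl_metric_inv]; field [Hd]; nonzero.
Qed.

Lemma biminimal_defect_cylinder lambda u k : I (u 0%nat) ->
  normal_part 3 sl2_metric (cylinder gam)
    (bitension 3 sl2_metric sl2_metric_inv (cylinder gam)) u k
  - lambda * normal_part 3 sl2_metric (cylinder gam)
               (tension 3 sl2_metric sl2_metric_inv (cylinder gam)) u k
  = let s := u 0%nat in
    let K := signed_curv gam s in
    frame_vec s 0 0 (Derive_n (signed_curv gam) 2 s - K ^ 3 - (2 + lambda) * K) k.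
Proof.
  intros Hu.
  rewrite (normal_part_frame _ _ _ _ u k Hu (fun j => bitension_cylinder u j Hu)).
  rewrite (normal_part_frame _ _ _ _ u k Hu (fun j => tension_cylinder u j Hu)).
  cbv zeta. destruct k as [|[|[|k]]]; cbn [frame_vec]; ring.
Qed.

Lemma frame_vec_normal_eq0 s r : I s ->
  (forall k, (k < 3)%nat -> frame_vec s 0 0 r k = 0) -> r = 0.
Proof.
  intros Hs Hr. pose proof (height_pos s Hs).
  pose proof (Hr 0%nat ltac:(lia)) as H0. pose proof (Hr 2%nat ltac:(lia)) as H2.
  cbn [frame_vec] in H0, H2.
  pose proof (tan_unit s Hs) as Hcd.
  assert (Hd : r * tan_z gam s = 0) by lra.
  assert (Hc : r * tan_y gam s = 0).
  { apply (Rmult_eq_reg_l (height gam s)); [|lra]. rewrite Rmult_0_r, <- H2. ring. }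
  transitivity (r * tan_y gam s * tan_y gam s + r * tan_z gam s * tan_z gam s);
    [ring [Hcd] | rewrite Hc, Hd; ring].
Qed.

Lemma cylinder_biminimal_iff lambda :
  biminimal 3 sl2_metric sl2_metric_inv (cylinder gam) lambda (fun u => I (u 0%nat))
  <-> biminimal_curve_H2 gam (lambda + 1) I.
Proof.
  split.
  - intros Hbi s Hs. cbv zeta.
    enough (Hr : Derive_n (signed_curv gam) 2 s - signed_curv gam s ^ 3
                 - (2 + lambda) * signed_curv gam s = 0) by lra.
    apply (frame_vec_normal_eq0 s _ Hs). intros k Hk.
    etransitivity; [symmetry; exact (biminimal_defect_cylinder lambda (fun _ => s) k Hs)|].
    now apply Hbi.
  - intros Hcurve u Hu k Hk. rewrite biminimal_defect_cylinder by exact Hu.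
    specialize (Hcurve _ Hu). cbv zeta in *.
    replace (Derive_n (signed_curv gam) 2 (u 0%nat) - signed_curv gam (u 0%nat) ^ 3
             - (2 + lambda) * signed_curv gam (u 0%nat)) with 0 by lra.
    destruct k as [|[|[|k]]]; cbn [frame_vec]; ring.
Qed.
End Cylinder.

Lemma open_Rbar_interval (a b : Rbar) : open (fun s : R => Rbar_lt a s /\ Rbar_lt s b).
Proof.
  intros x [Hax Hxb]. apply filter_and; [apply open_Rbar_gt | apply open_Rbar_lt]; assumption.
Qed.

Theorem proposition5p3 (a b : Rbar) (gam : R -> point) (lambda : R) :
  Rbar_lt a b ->
  let I := fun s : R => Rbar_lt a s /\ Rbar_lt s b in
  (forall (k m : nat) (s : R), I s -> (k < 2)%nat ->
      ex_derive_n (fun t => gam t k) m s) ->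
  (forall s, I s -> 0 < gam s 1%nat) ->
  (forall s, I s ->
      rsum 2 (fun i => rsum 2 (fun j =>
        hyp_metric (gam s) i j * vel gam s i * vel gam s j)) = 1) ->
  (biminimal 3 sl2_metric sl2_metric_inv (cylinder gam) lambda
      (fun u => I (u 0%nat))
   <-> biminimal_curve_H2 gam (lambda + 1) I).
Proof.
  intros _ I Hsmooth Hpos Hunit.
  exact (cylinder_biminimal_iff gam I (open_Rbar_interval a b) Hsmooth Hpos Hunit lambda).
Qed.
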